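(* Let a countable group $G$ act continuously on a Polish space $X$ and let $E$ be an equivalence relation on $X$. If $E\subseteq E^X_G$ and $E$ is $G$-clopen, then $E$ is an $F_\sigma$ subset of $X\times X$ (in particular Borel). If $E$ is a clopen subset of $X\times X$, then $E$ is $G$-clopen.
   Context: $E^X_G$ is the orbit equivalence relation $x\mathrel{E^X_G}y\iff\exists g\in G\,(g\cdot x=y)$. A relation $R\subseteq X\times X$ is $G$-clopen if for every $g\in G$ the set $\{x\in X: (x,g\cdot x)\in R\}$ is clopen in $X$. *)

From mathcomp Require Import all_boot all_order all_algebra.
From mathcomp Require Import all_classical all_reals all_analysis.
From mathcomp Require Import borel_hierarchy.
From mathcomp Require Import Rstruct Rstruct_topology.
Set Implicit Arguments. Unset Strict Implicit. Unset Printing Implicit Defensive.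
Import Order.TTheory GRing.Theory Num.Theory.
Local Open Scope classical_set_scope.
Local Open Scope ring_scope.

Definition polish (X : topologicalType) : Prop :=
  (exists d : X -> X -> Rdefinitions.R,
    [/\ (forall x y, 0 <= d x y) /\ (forall x y, d x y = 0 <-> x = y),
        (forall x y, d x y = d y x),
        (forall x y z, d x z <= d x y + d y z),
        (forall A : set X, open A <->
           (forall x, A x -> (exists2 e, 0 < e & forall y, d x y < e -> A y))) &
        (forall u : nat -> X,
           (forall e, 0 < e -> exists N, forall m n, (N <= m)%N -> (N <= n)%N ->
               d (u m) (u n) < e) ->
           exists l : X, u @ \oo --> l)])
  /\ exists D : set X, countable D /\ dense D.

Definition is_group (G : Type) (mul : G -> G -> G) (one : G) (inv : G -> G) :=
  [/\ (forall a b c, mul a (mul b c) = mul (mul a b) c),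
      (forall a, mul one a = a), (forall a, mul a one = a),
      (forall a, mul (inv a) a = one) & (forall a, mul a (inv a) = one)].

Definition is_action (G X : Type) (mul : G -> G -> G) (one : G)
  (act : G -> X -> X) :=
  (forall x, act one x = x) /\ (forall g h x, act (mul g h) x = act g (act h x)).

Definition orbit_rel (G X : Type) (act : G -> X -> X) : set (X * X) :=
  [set p | exists g, act g p.1 = p.2].

Definition G_clopen (G : Type) (X : topologicalType) (act : G -> X -> X)
  (R : set (X * X)) : Prop :=
  forall g, clopen [set x | R (x, act g x)].

Definition is_equiv_relation (X : Type) (E : set (X * X)) : Prop :=
  [/\ (forall x, E (x, x)), (forall x y, E (x, y) -> E (y, x)) &
      (forall x y z, E (x, y) -> E (y, z) -> E (x, z))].

From mathcomp Require Import all_boot all_order all_algebra.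
From mathcomp Require Import all_classical all_reals all_analysis.
From mathcomp Require Import borel_hierarchy.
From mathcomp Require Import Rstruct Rstruct_topology.
From mathcomp Require Import lra.
Import Order.TTheory GRing.Theory Num.Theory.
Local Open Scope classical_set_scope.
Local Open Scope ring_scope.

(* For g in G put E_g = {x | E (x, g x)}, closed since E is G-clopen.  As E is
   contained in the orbit relation, E is the union over the countable group of
   the sets (E_g x X) `&` graph(g), and the graph of the continuous map g is
   closed because a Polish space is Hausdorff.  Conversely E_g is the preimage
   of E under the continuous map x |-> (x, g x). *)

Section metric_topology.
Context {X : topologicalType} {R : realFieldType} {d : X -> X -> R}.
Hypothesis d_ge0 : forall x y, 0 <= d x y.
Hypothesis d_eq0 : forall x y, d x y = 0 <-> x = y.
Hypothesis d_sym : forall x y, d x y = d y x.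
Hypothesis d_triangle : forall x y z, d x z <= d x y + d y z.
Hypothesis d_open : forall A : set X,
  (forall x, A x -> exists2 e, 0 < e & forall y, d x y < e -> A y) -> open A.

Lemma metric_ball_open x r : open [set y | d x y < r].
Proof.
apply: d_open => y /= dxy; exists (r - d x y); first by rewrite subr_gt0.
move=> z dyz; have := d_triangle x y z; lra.
Qed.

Lemma metric_ball_nbhs x r : 0 < r -> nbhs x [set y | d x y < r].
Proof.
move=> r_gt0; apply: open_nbhs_nbhs; split; first exact: metric_ball_open.
by rewrite /= (proj2 (d_eq0 x x)).
Qed.

Lemma metric_hausdorff : hausdorff_space X.
Proof.
move=> x y cl; apply/d_eq0/eqP; rewrite eq_le d_ge0 andbT.
apply/ler_addgt0Pr => e e_gt0; rewrite add0r.
have e2_gt0 : 0 < e / 2 by rewrite divr_gt0.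
have [z [/= dxz dyz]] :=
  cl _ _ (metric_ball_nbhs x _ e2_gt0) (metric_ball_nbhs y _ e2_gt0).
have := d_triangle x z y; rewrite (d_sym z y); lra.
Qed.

End metric_topology.

Lemma polish_hausdorff {X : topologicalType} : polish X -> hausdorff_space X.
Proof.
move=> [[d [[d_ge0 d_eq0] d_sym d_triangle d_open _]] _].
exact: (metric_hausdorff d_ge0 d_eq0 d_sym d_triangle (fun A => proj2 (d_open A))).
Qed.

Lemma closed_diagonal {X : topologicalType} :
  hausdorff_space X -> closed [set p : X * X | p.1 = p.2].
Proof.
move=> hX [x y] cl; apply: hX => A B Ax By.
have [[z _] [/= <- [Az Bz]]] : [set p : X * X | p.1 = p.2] `&` (A `*` B) !=set0.
  by apply: cl; exists (A, B).
by exists z.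
Qed.

Lemma closed_graph (T X : topologicalType) (f : T -> X) :
  hausdorff_space X -> continuous f -> closed [set p : T * X | f p.1 = p.2].
Proof.
move=> hX f_cont.
have -> : [set p : T * X | f p.1 = p.2] =
    (fun p => (f p.1, p.2)) @^-1` [set q : X * X | q.1 = q.2] by [].
have pair_cont : continuous (fun p : T * X => (f p.1, p.2)).
  by move=> p; apply: cvg_pair; [exact: continuous_comp cvg_fst (f_cont _)|exact: cvg_snd].
exact: (continuous_closedP _).1 pair_cont _ (closed_diagonal hX).
Qed.

Lemma countable_bigcup_Fsigma (T : topologicalType) (I : Type) (F : I -> set T) :
  countable [set: I] -> (forall i, closed (F i)) -> Fsigma (\bigcup_i F i).
Proof.
move=> /Pcountable[J I_J] F_closed; subst I.
exists (fun n => if unpickle n is Some j then F j else set0).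
  by move=> n; case: unpickle => [j|]; [exact: F_closed|exact: closed0].
apply/seteqP; split=> [p [j _ Fjp]|p [n _]].
  by exists (pickle j) => //; rewrite pickleK.
by case: unpickle => // j Fjp; exists j.
Qed.

Lemma orbit_subrel_bigcup {G X : Type} {act : G -> X -> X} {R : set (X * X)} :
  R `<=` orbit_rel act ->
  R = \bigcup_g ([set p | R (p.1, act g p.1)] `&` [set p | act g p.1 = p.2]).
Proof.
move=> R_orbit; apply/seteqP; split=> [[x y] Rxy|[x y] [g _ [/= Rxgx <-//]]].
by have [g /= gxy] := R_orbit _ Rxy; exists g => //=; rewrite gxy.
Qed.

Lemma orbit_subrel_Fsigma {G : Type} {X : topologicalType} {act : G -> X -> X}
    {R : set (X * X)} :
  countable [set: G] -> (forall g, continuous (act g)) -> hausdorff_space X ->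
  R `<=` orbit_rel act -> (forall g, closed [set x | R (x, act g x)]) ->
  Fsigma R.
Proof.
move=> G_countable act_cont hX R_orbit R_closed.
rewrite (orbit_subrel_bigcup R_orbit).
apply: countable_bigcup_Fsigma => // g; apply: closedI; last exact: closed_graph.
have fst_cont : continuous (@fst X X) by move=> p; exact: cvg_fst.
exact: (continuous_closedP _).1 fst_cont _ (R_closed g).
Qed.

Lemma clopen_G_clopen (G : Type) (X : topologicalType) (act : G -> X -> X)
    (R : set (X * X)) :
  (forall g, continuous (act g)) -> clopen R -> G_clopen act R.
Proof.
move=> act_cont R_clopen g.
apply: (preimage_clopen (f := fun x => (x, act g x))) => // x.
by apply: cvg_pair; [exact: cvg_id|exact: act_cont].
Qed.

Theorem lemma3p4 (G : Type) (mul : G -> G -> G) (one : G) (inv : G -> G)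
  (X : topologicalType) (act : G -> X -> X) (E : set (X * X)) :
  is_group mul one inv ->
  countable [set: G] ->
  is_action mul one act ->
  (forall g, continuous (act g)) ->
  polish X ->
  is_equiv_relation E ->
  ((E `<=` orbit_rel act -> G_clopen act E -> Fsigma E) /\
   (clopen E -> G_clopen act E)).
Proof.
move=> _ G_countable _ act_cont X_polish _; split; last exact: clopen_G_clopen.
move=> E_orbit E_G_clopen.
apply: (orbit_subrel_Fsigma G_countable act_cont (polish_hausdorff X_polish) E_orbit).
by move=> g; case: (E_G_clopen g).
Qed.
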